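(* Let $w_1=a$, $w_2=b$, $w_3=ba$, $w_4=baabbaa$, and $w_n = b\cdot\mathit{TM}_{2n-8}\cdot\overline{\mathit{TM}_{2n-6}}\cdot\overline{\mathit{TM}_{2n-6}}'$ for $n\ge 5$, and let $W=w_1w_2w_3\cdots$ be their infinite concatenation. Then $\tau^2(W)=W$.
   Context: Strings are over $\{a,b\}$. For a binary string $w$, $\overline{w}$ is obtained by exchanging $a$ and $b$ letterwise, and $w'$ is $w$ with its last letter removed; $\overline{w}'$ means $(\overline{w})'$. Thue–Morse words: $\mathit{TM}_0=a$ and $\mathit{TM}_k=\mathit{TM}_{k-1}\cdot\overline{\mathit{TM}_{k-1}}$ for $k\ge1$. The Thue–Morse morphism $\tau$ is the morphism with $\tau(a)=ab$, $\tau(b)=ba$, extended letterwise to infinite words; $\tau^2=\tau\circ\tau$. *)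

(* Letters: a = false, b = true. *)
From mathcomp Require Import all_boot.
Set Implicit Arguments. Unset Strict Implicit. Unset Printing Implicit Defensive.

Definition la : bool := false.
Definition lb : bool := true.

Definition compl (w : seq bool) : seq bool := map negb w.
Definition dropLast (w : seq bool) : seq bool := take (size w).-1 w.

Fixpoint TM (k : nat) : seq bool :=
  match k with
  | 0 => [:: la]
  | k'.+1 => TM k' ++ compl (TM k')
  end.

(* w_n, for n >= 1 (w_0 is unused) *)
Definition w (n : nat) : seq bool :=
  match n with
  | 0 => [::]
  | 1 => [:: la]
  | 2 => [:: lb]
  | 3 => [:: lb; la]
  | 4 => [:: lb; la; la; lb; lb; la; la]
  | _ => lb :: TM (2 * n - 8) ++ compl (TM (2 * n - 6))
            ++ dropLast (compl (TM (2 * n - 6)))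
  end.

Definition Wprefix (n : nat) : seq bool := flatten [seq w k | k <- iota 1 n].

(* the infinite word W = w_1 w_2 w_3 ..., as a function nat -> letter;
   since every w_k (k >= 1) is nonempty, Wprefix i.+1 has length > i *)
Definition W (i : nat) : bool := nth la (Wprefix i.+1) i.

Definition tau_letter (c : bool) : seq bool := if c then [:: lb; la] else [:: la; lb].
Definition tau (x : nat -> bool) : nat -> bool :=
  fun i => nth la (tau_letter (x (i %/ 2))) (i %% 2).

(* Put P_n := w_1 ... w_n b and B_m := TM_{2m} ~TM_{2m+2} ~TM_{2m+2}, where ~ is
   complementation.  Since ~TM_{2m+2} ends in b, w_{m+4} b = b B_m for m >= 1, i.e.
   P_{m+4} = P_{m+3} B_m.  As tau^2 maps TM_k to TM_{k+2} and commutes with ~, it maps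
   B_m to B_{m+1}; together with tau^2(P_4) = P_5 this gives tau^2(P_n) = P_{n+1} for
   all n >= 4, so W and tau^2(W) share arbitrarily long prefixes. *)
From mathcomp Require Import all_boot.
From mathcomp Require Import zify.

Set Implicit Arguments.
Unset Strict Implicit.
Unset Printing Implicit Defensive.

Definition tau_seq (s : seq bool) : seq bool := flatten (map tau_letter s).

Lemma tau_seq_cat s t : tau_seq (s ++ t) = tau_seq s ++ tau_seq t.
Proof. by rewrite /tau_seq map_cat flatten_cat. Qed.

Lemma tau_seq_compl s : tau_seq (compl s) = compl (tau_seq s).
Proof. by elim: s => [|[] s IHs] //=; rewrite /tau_seq /= -/(tau_seq _) IHs. Qed.

Lemma size_tau_seq s : size (tau_seq s) = 2 * size s.
Proof. by elim: s => [|[] s IHs] //=; rewrite /tau_seq /= -/(tau_seq _) IHs mulnS. Qed.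

Lemma nth_tau_seq s i : i < 2 * size s ->
  nth la (tau_seq s) i = nth la (tau_letter (nth la s (i %/ 2))) (i %% 2).
Proof.
elim: s i => [|c s IHs] [|[|i]] //=; rewrite /tau_seq /= -/(tau_seq _); try by case: c.
rewrite mulnS !ltnS => lt_i_s.
have -> : nth la (tau_letter c ++ tau_seq s) i.+2 = nth la (tau_seq s) i by case: c.
have -> : i.+2 = 1 * 2 + i by rewrite add2n.
by rewrite divnMDl // modnMDl add1n IHs.
Qed.

Lemma tau_seq_TM k : tau_seq (TM k) = TM k.+1.
Proof. by elim: k => [|k IHk] //=; rewrite tau_seq_cat tau_seq_compl IHk. Qed.

Lemma TM_neq0 k : TM k != [::].
Proof. by elim: k => //= k; case: (TM k). Qed.

Lemma last_compl s x y : s != [::] -> last x (compl s) = ~~ last y s.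
Proof. by case: s => [|z s] //= _; rewrite last_map. Qed.

Lemma last_TM k : last la (TM k) = odd k.
Proof. by elim: k => //= k IHk; rewrite last_cat (last_compl _ la) ?TM_neq0 // IHk. Qed.

Lemma rcons_dropLast s x : s != [::] -> rcons (dropLast s) (last x s) = s.
Proof.
case/lastP: s => [|s y] // _.
by rewrite last_rcons /dropLast size_rcons -[rcons s y]cats1 take_size_cat // cats1.
Qed.

Lemma compl_TM_even m : rcons (dropLast (compl (TM (2 * m)))) lb = compl (TM (2 * m)).
Proof.
have compl_neq0 : compl (TM (2 * m)) != [::] by case: (TM _) (TM_neq0 (2 * m)).
have last_lb : last lb (compl (TM (2 * m))) = lb.
  by rewrite (last_compl _ la) ?TM_neq0 // last_TM oddM.
by rewrite -[X in rcons _ X]last_lb rcons_dropLast.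
Qed.

Definition tm_block (m : nat) : seq bool :=
  TM (2 * m) ++ compl (TM (2 * m + 2)) ++ compl (TM (2 * m + 2)).

Lemma tau_seq2_tm_block m : tau_seq (tau_seq (tm_block m)) = tm_block m.+1.
Proof.
rewrite /tm_block !tau_seq_cat !tau_seq_compl !tau_seq_TM.
by congr (TM _ ++ compl (TM _) ++ compl (TM _)); lia.
Qed.

Lemma w_cat_b m : w m.+4.+1 ++ [:: lb] = lb :: tm_block m.+1.
Proof.
have -> : w m.+4.+1 = lb :: TM (2 * m.+1) ++ compl (TM (2 * m.+2))
                        ++ dropLast (compl (TM (2 * m.+2))).
  by rewrite [LHS]/w; congr (_ :: TM _ ++ compl (TM _) ++ dropLast (compl (TM _))); lia.
rewrite cats1 rcons_cons 2!rcons_cat compl_TM_even /tm_block.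
by congr (_ :: TM _ ++ compl (TM _) ++ compl (TM _)); lia.
Qed.

Lemma Wprefix_add m n :
  Wprefix (m + n) = Wprefix m ++ flatten [seq w k | k <- iota m.+1 n].
Proof. by rewrite /Wprefix iotaD map_cat flatten_cat. Qed.

Lemma Wprefix_S n : Wprefix n.+1 = Wprefix n ++ w n.+1.
Proof. by rewrite -[in LHS]addn1 Wprefix_add /= cats0. Qed.

Lemma size_w_gt0 k : 0 < k -> 0 < size (w k).
Proof. by case: k => [|[|[|[|[|k]]]]]. Qed.

Lemma w_head k : 1 < k -> w k = lb :: behead (w k).
Proof. by case: k => [|[|[|[|[|k]]]]]. Qed.

Lemma size_Wprefix n : n <= size (Wprefix n).
Proof.
elim: n => [|n IHn] //; rewrite Wprefix_S size_cat.
by have := size_w_gt0 (ltn0Sn n); lia.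
Qed.

Lemma Wprefix_b_S m :
  Wprefix m.+4.+1 ++ [:: lb] = (Wprefix m.+4 ++ [:: lb]) ++ tm_block m.+1.
Proof. by rewrite Wprefix_S -catA w_cat_b -catA. Qed.

Lemma tau_seq2_Wprefix_b n :
  tau_seq (tau_seq (Wprefix n.+4 ++ [:: lb])) = Wprefix n.+4.+1 ++ [:: lb].
Proof.
elim: n => [|n IHn]; first by vm_compute.
by rewrite Wprefix_b_S (tau_seq_cat (_ ++ _)) tau_seq_cat IHn tau_seq2_tm_block -Wprefix_b_S.
Qed.

Definition agrees_with (s : seq bool) (x : nat -> bool) : Prop :=
  forall j, j < size s -> x j = nth la s j.

Lemma agrees_with_catl s t x : agrees_with (s ++ t) x -> agrees_with s x.
Proof.
by move=> st_x j lt_j_s; rewrite st_x ?nth_cat ?lt_j_s // size_cat ltn_addr.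
Qed.

Lemma agrees_with_tau s x : agrees_with s x -> agrees_with (tau_seq s) (tau x).
Proof.
move=> s_x j; rewrite size_tau_seq => lt_j; rewrite nth_tau_seq // /tau s_x //.
by rewrite ltn_divLR // mulnC.
Qed.

Lemma agrees_with_W n : agrees_with (Wprefix n) W.
Proof.
move=> j lt_j_n; rewrite /W.
case: (leqP n j.+1) => [le_n_j1 | lt_j1_n].
  by rewrite -(subnKC le_n_j1) Wprefix_add nth_cat lt_j_n.
rewrite -(subnKC (ltnW lt_j1_n)) Wprefix_add nth_cat.
by rewrite (leq_trans _ (size_Wprefix j.+1)).
Qed.

Lemma agrees_with_W_b n : 0 < n -> agrees_with (Wprefix n ++ [:: lb]) W.
Proof.
move=> n_gt0; apply: (@agrees_with_catl _ (behead (w n.+1))).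
by rewrite -catA cat1s -w_head // -Wprefix_S; apply: agrees_with_W.
Qed.

Theorem mainTheorem10 : forall i : nat, tau (tau W) i = W i.
Proof.
move=> i.
have := agrees_with_tau (agrees_with_tau (@agrees_with_W_b i.+4 isT)).
rewrite tau_seq2_Wprefix_b => tau2W_b.
have lt_i : i < size (Wprefix i.+4.+1 ++ [:: lb]).
  by rewrite size_cat; have := size_Wprefix i.+4.+1; lia.
by rewrite tau2W_b // (@agrees_with_W_b i.+4.+1 isT _ lt_i).
Qed.
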